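(* Let $\mathcal{M}=\langle S,\iota,\mathsf{Act},P,\mathsf{Z},\mathsf{obs}\rangle$ be an MDP, $\tau\in\mathsf{Z}^+$ a trace and $r\colon S\to\mathbb{R}_{\ge0}$ a state-risk function. Then $R_r(\tau)=\sup_{\mathsf{bel}\in\mathsf{est}_{\mathsf{MDP}}(\tau)}\sum_{s\in S}\mathsf{bel}(s)\cdot r(s)$.
   Context: An MDP is a tuple $\langle S,\iota,\mathsf{Act},P,\mathsf{Z},\mathsf{obs}\rangle$: finite state set $S$, initial distribution $\iota\in\mathsf{Distr}(S)$, finite action set $\mathsf{Act}$, partial transition function $P\colon S\times\mathsf{Act}\rightharpoonup\mathsf{Distr}(S)$ (write $P(s,\alpha,s')=P(s,\alpha)(s')$), finite observation set $\mathsf{Z}$, observation function $\mathsf{obs}\colon S\to\mathsf{Distr}(\mathsf{Z})$; $\mathsf{AvAct}(s)=\{\alpha\mid P(s,\alpha)\text{ defined}\}\neq\emptyset$. A finite path is $\pi=s_0a_0\dots a_{n-1}s_n$ with $\iota(s_0)>0$, $P(s_i,a_i)(s_{i+1})>0$; $\mathrm{last}(\pi)=s_n$. A scheduler $\sigma$ maps each finite path $\pi$ to a distribution on $\mathsf{AvAct}(\mathrm{last}(\pi))$; $\Sigma$ is the set of schedulers; $\Pr^\sigma(\pi)=\iota(s_0)\prod_{i<n}\sigma(s_0a_0\dots s_i)(a_i)P(s_i,a_i)(s_{i+1})$. For a trace $\tau=z_0\dots z_n\in\mathsf{Z}^+$ and path $\pi=s_0\dots s_m$, $\Pr(\tau\mid\pi)=\prod_{i=0}^n\mathsf{obs}(s_i)(z_i)$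 if $m=n$, else $0$; $\mathrm{Paths}(\tau)$ are the paths with as many states as $\tau$ has observations; $\Pr^\sigma(\tau)=\sum_\pi\Pr^\sigma(\pi)\Pr(\tau\mid\pi)$; $\Pr^\sigma(\pi\mid\tau)=\Pr(\tau\mid\pi)\Pr^\sigma(\pi)/\Pr^\sigma(\tau)$ with $0/0=0$. The weighted risk is $R_r(\tau)=\sup_{\sigma\in\Sigma}\sum_{\pi\in\mathrm{Paths}(\tau)}\Pr^\sigma(\pi\mid\tau)r(\mathrm{last}(\pi))$. Beliefs: $\mathsf{Bel}=\mathsf{Distr}(S)\cup\{\mathbf{0}\}$, $\mathbf{0}$ the zero function on $S$. Define $\mathsf{est}_{\mathsf{MDP}}\colon\mathsf{Z}^+\to2^{\mathsf{Bel}}$ by $\mathsf{est}_{\mathsf{MDP}}(z)=\{b_z\}$ where $b_z(s)=\iota(s)\mathsf{obs}(s)(z)/\sum_{\hat s}\iota(\hat s)\mathsf{obs}(\hat s)(z)$ if some $s$ has $\iota(s)\mathsf{obs}(s)(z)>0$ and $b_z=\mathbf{0}$ otherwise; and $\mathsf{est}_{\mathsf{MDP}}(\tau\cdot z)=\bigcup_{\mathsf{bel}\in\mathsf{est}_{\mathsf{MDP}}(\tau)}\mathsf{est}^{\mathsf{up}}(\mathsf{bel},z)$, where $\mathsf{bel}'\in\mathsf{est}^{\mathsf{up}}(\mathsf{bel},z)$ iff there is $\varsigma\colon S\to\mathsf{Distr}(\mathsf{Act})$ with $\varsigma(s)$ supported in $\mathsf{AvAct}(s)$ such that for all $s'$: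 $\mathsf{bel}'(s')=\dfrac{\sum_s\mathsf{bel}(s)\sum_\alpha\varsigma(s)(\alpha)P(s,\alpha,s')\mathsf{obs}(s')(z)}{\sum_s\mathsf{bel}(s)\sum_\alpha\varsigma(s)(\alpha)\sum_{\hat s}P(s,\alpha,\hat s)\mathsf{obs}(\hat s)(z)}$ (with $0/0=0$). *)

From HB Require Import structures.
From mathcomp Require Import all_boot all_order all_algebra.
From mathcomp Require Import classical_sets boolp reals.
Set Implicit Arguments. Unset Strict Implicit. Unset Printing Implicit Defensive.
Import Order.TTheory GRing.Theory Num.Theory.
Local Open Scope ring_scope.
Local Open Scope classical_set_scope.

Section MDPDefs.
Variables (R : realType) (S Act Z : finType).

Definition is_distr (T : finType) (d : {ffun T -> R}) : Prop :=
  (forall t, 0 <= d t) /\ \sum_(t : T) d t = 1.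

(* An MDP <S, iota, Act, P, Z, obs>; P is partial (None = undefined). *)
Record MDP := mkMDP {
  iota : {ffun S -> R};
  P : S -> Act -> option {ffun S -> R};
  obs : S -> {ffun Z -> R}
}.

Definition wf_MDP (M : MDP) : Prop :=
  [/\ is_distr (iota M),
      (forall s a d, P M s a = Some d -> is_distr d),
      (forall s, is_distr (obs M s)) &
      (forall s, exists a, P M s a <> None)].

Definition Pt (M : MDP) (s : S) (a : Act) (s' : S) : R :=
  if P M s a is Some d then d s' else 0.

(* a scheduler maps a finite path, given as the list of (state,action) pairs
   (s_0,a_0)...(s_{n-1},a_{n-1}) followed by the last state s_n, to a
   distribution on the available actions of the last state *)
Definition scheduler := seq (S * Act) -> S -> {ffun Act -> R}.

Definition is_scheduler (M : MDP) (sigma : scheduler) : Prop :=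
  forall h s, is_distr (sigma h s) /\
              (forall a, P M s a = None -> sigma h s a = 0).

Section Trace.
(* the trace tau = z0 :: zs, of length n.+1 with n = size zs;
   paths in Paths(tau) are ss_0 acts_0 ss_1 ... acts_{n-1} ss_n *)
Variables (M : MDP) (z0 : Z) (zs : seq Z).
Let n := size zs.

Definition tr (i : nat) : Z := nth z0 (z0 :: zs) i.

Definition hist (ss : {ffun 'I_n.+1 -> S}) (acts : {ffun 'I_n -> Act})
  (i : nat) : seq (S * Act) :=
  map (fun j : 'I_n => (ss (inord j), acts j))
      (filter (fun k : 'I_n => (k < i)%N) (enum 'I_n)).

Definition Pr_path (sigma : scheduler) (ss : {ffun 'I_n.+1 -> S})
  (acts : {ffun 'I_n -> Act}) : R :=
  iota M (ss ord0) *
  \prod_(i < n) (sigma (hist ss acts i) (ss (inord i)) (acts i) *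
                 Pt M (ss (inord i)) (acts i) (ss (inord i.+1))).

Definition Pr_obs (ss : {ffun 'I_n.+1 -> S}) : R :=
  \prod_(i < n.+1) obs M (ss i) (tr i).

Definition Pr_trace (sigma : scheduler) : R :=
  \sum_(ss : {ffun 'I_n.+1 -> S}) \sum_(acts : {ffun 'I_n -> Act})
     Pr_path sigma ss acts * Pr_obs ss.

(* sum_{pi in Paths(tau)} Pr^sigma(pi | tau) r(last pi)  (x / 0 = 0) *)
Definition risk_value (r : S -> R) (sigma : scheduler) : R :=
  \sum_(ss : {ffun 'I_n.+1 -> S}) \sum_(acts : {ffun 'I_n -> Act})
     (Pr_obs ss * Pr_path sigma ss acts / Pr_trace sigma) * r (ss ord_max).

Definition weighted_risk (r : S -> R) : R :=
  sup [set v | exists sigma, is_scheduler M sigma /\ v = risk_value r sigma].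

End Trace.

(* beliefs: functions S -> R (distributions or the zero function) *)
Definition belief := {ffun S -> R}.

Definition init_belief (M : MDP) (z : Z) : belief :=
  if [exists s, 0 < iota M s * obs M s z] then
    [ffun s => iota M s * obs M s z /
               \sum_(s0 : S) iota M s0 * obs M s0 z]
  else [ffun => 0].

(* est^up(bel, z); division by 0 yields 0 in MathComp, matching 0/0 = 0 *)
Definition est_up (M : MDP) (bel : belief) (z : Z) : set belief :=
  [set bel' | exists vs : S -> {ffun Act -> R},
     (forall s, is_distr (vs s) /\ (forall a, P M s a = None -> vs s a = 0)) /\
     (forall s', bel' s' =
        (\sum_(s : S) bel s * \sum_(a : Act) vs s a * Pt M s a s' * obs M s' z) /
        (\sum_(s : S) bel s * \sum_(a : Act) vs s a *
            \sum_(sh : S) Pt M s a sh * obs M sh z))].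

Definition est_MDP (M : MDP) (z0 : Z) (zs : seq Z) : set belief :=
  foldl (fun B z => \bigcup_(b in B) est_up M b z) [set init_belief M z0] zs.

End MDPDefs.

(* Let [forward sigma n s] be the probability, under the scheduler [sigma], of
   emitting the first n+1 observations of the trace along a path ending in [s].
   The risk of [sigma] is the r-average of the normalized forward vector, so
   it suffices to show that est_MDP consists exactly of the normalized forward
   vectors.  A step of est_up with decision rule [vs] maps [normalize m] to
   [normalize (update vs m)] for the linear map [update vs].  Conversely,
   [forward sigma n.+1] is the update of [forward sigma n] by the rule "action
   of [sigma] at step n given the current state", and any decision rule is
   realised at step n by the scheduler that plays it on histories of length n
   and follows [sigma] elsewhere, which leaves [forward sigma n] unchanged. *)

From Pilot Require Import Defs.
From HB Require Import structures.
From mathcomp Require Import all_boot all_order all_algebra.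
From mathcomp Require Import classical_sets boolp reals.
From mathcomp Require Import ring.
Import Order.TTheory GRing.Theory Num.Theory.
Set Implicit Arguments. Unset Strict Implicit. Unset Printing Implicit Defensive.
Local Open Scope ring_scope.
Local Open Scope classical_set_scope.

Section FfunRcons.
Variables (T : finType) (n : nat).

Definition ffun_rcons (g : {ffun 'I_n -> T}) (x : T) : {ffun 'I_n.+1 -> T} :=
  [ffun i => oapp g x (unlift ord_max i)].

Lemma ffun_rcons_lift g x j : ffun_rcons g x (lift ord_max j) = g j.
Proof. by rewrite ffunE liftK. Qed.

Lemma ffun_rcons_max g x : ffun_rcons g x ord_max = x.
Proof. by rewrite ffunE unlift_none. Qed.

Lemma ffun_rcons_widen g x j : ffun_rcons g x (widen_ord (leqnSn n) j) = g j.
Proof.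
have -> : widen_ord (leqnSn n) j = lift ord_max j.
  by apply/val_inj; rewrite /= /bump leqNgt ltn_ord.
exact: ffun_rcons_lift.
Qed.

Lemma big_ffun_rcons {V : Type} {idx : V} {op : Monoid.com_law idx}
    (P : pred {ffun 'I_n.+1 -> T}) (F : {ffun 'I_n.+1 -> T} -> V) :
  \big[op/idx]_(f | P f) F f =
  \big[op/idx]_(g : {ffun 'I_n -> T}) \big[op/idx]_(x | P (ffun_rcons g x))
     F (ffun_rcons g x).
Proof.
rewrite pair_big_dep (reindex (fun p => ffun_rcons p.1 p.2)).
  by apply: eq_bigl => -[g x].
exists (fun f : {ffun 'I_n.+1 -> T} => ([ffun j => f (lift ord_max j)], f ord_max)).
  move=> [g x] _.
  rewrite ffun_rcons_max; congr pair; apply/ffunP => j.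
  by rewrite ffunE ffun_rcons_lift.
move=> f _; apply/ffunP => i; rewrite /ffun_rcons ffunE.
by case: unliftP => [j ->|->]; cbn [oapp fst snd]; rewrite ?ffunE.
Qed.

End FfunRcons.

Lemma ffun_rcons_inord (T : finType) n (g : {ffun 'I_n.+1 -> T}) x i :
  (i <= n)%N -> ffun_rcons g x (inord i) = g (inord i).
Proof.
move=> le_in; have -> : inord i = lift ord_max (inord i : 'I_n.+1).
  apply/val_inj; rewrite /= /bump !inordK ?ltnS ?(leqW le_in) //.
  by rewrite ltnNge le_in.
exact: ffun_rcons_lift.
Qed.

Lemma ffun_rcons_ord0 (T : finType) n (g : {ffun 'I_n.+1 -> T}) x :
  ffun_rcons g x ord0 = g ord0.
Proof.
have -> : ord0 = lift ord_max (ord0 : 'I_n.+1) by apply/val_inj.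
exact: ffun_rcons_lift.
Qed.

Lemma partition_big_subst {V : Type} {idx : V} {op : Monoid.com_law idx}
    (I J : finType) (p : I -> J) (F : I -> J -> V) :
  \big[op/idx]_i F i (p i) = \big[op/idx]_j \big[op/idx]_(i | p i == j) F i j.
Proof.
rewrite (partition_big p predT) //.
by apply: eq_bigr => j _; apply: eq_bigr => i /eqP ->.
Qed.

Section BeliefUpdate.
Variables (R : realType) (S Act Z : finType) (M : MDP R S Act Z).

Definition decision_rule (vs : S -> {ffun Act -> R}) : Prop :=
  forall s, is_distr (vs s) /\ (forall a, P M s a = None -> vs s a = 0).

Definition normalize (m : {ffun S -> R}) : belief R S :=
  [ffun s => m s / \sum_s0 m s0].

Definition update (vs : S -> {ffun Act -> R}) (m : {ffun S -> R}) (z : Z) :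
    {ffun S -> R} :=
  [ffun s' => \sum_s m s * \sum_a vs s a * Pt M s a s' * obs M s' z].

Lemma sum_update vs m z :
  \sum_s' update vs m z s' =
  \sum_s m s * \sum_a vs s a * \sum_sh Pt M s a sh * obs M sh z.
Proof.
under eq_bigr => s' _ do rewrite ffunE.
rewrite exchange_big; apply: eq_bigr => s _; rewrite -mulr_sumr; congr (_ * _).
rewrite exchange_big; apply: eq_bigr => a _.
by rewrite mulr_sumr; apply: eq_bigr => sh _; rewrite mulrA.
Qed.

Lemma update_normalize vs m z s' :
  update vs (normalize m) z s' = update vs m z s' / \sum_s m s.
Proof.
by rewrite !ffunE mulr_suml; apply: eq_bigr => s _; rewrite ffunE mulrAC.
Qed.

Lemma est_up_ratio_normalize (vs : S -> {ffun Act -> R}) (m : {ffun S -> R}) z s' :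
  (forall s, 0 <= m s) ->
  (\sum_s normalize m s * \sum_a vs s a * Pt M s a s' * obs M s' z) /
  (\sum_s normalize m s * \sum_a vs s a * \sum_sh Pt M s a sh * obs M sh z) =
  normalize (update vs m z) s'.
Proof.
move=> m_ge0; rewrite -sum_update -[X in X / _](ffunE (fun s' =>
  \sum_s normalize m s * \sum_a vs s a * Pt M s a s' * obs M s' z)).
under eq_bigr => sh _ do rewrite update_normalize.
rewrite update_normalize -mulr_suml [RHS]ffunE.
have [m0|m0] := eqVneq (\sum_s m s) 0; last by rewrite invf_div mulrA divfK.
have m_eq0 s : m s = 0 by exact: (psumr_eq0P (fun s _ => m_ge0 s) m0).
rewrite m0 invr0 !mulr0 mul0r ffunE big1 ?mul0r // => s _.
by rewrite m_eq0 mul0r.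
Qed.

Lemma est_up_normalizeP (m : {ffun S -> R}) z bel : (forall s, 0 <= m s) ->
  est_up M (normalize m) z bel <->
  exists2 vs, decision_rule vs & bel = normalize (update vs m z).
Proof.
move=> m_ge0; split => [[vs [vs_rule bel_eq]]|[vs vs_rule ->]].
  by exists vs => //; apply/ffunP => s'; rewrite bel_eq est_up_ratio_normalize.
by exists vs; split => // s'; rewrite est_up_ratio_normalize.
Qed.

End BeliefUpdate.

Section ForwardVector.
Variables (R : realType) (S Act Z : finType) (M : MDP R S Act Z) (t : nat -> Z).

(* [hist], [Pr_path] and [Pr_obs] for paths of any length [n], reading the
   trace from [t]. *)
Definition history n (ss : {ffun 'I_n.+1 -> S}) (acts : {ffun 'I_n -> Act})
    (i : nat) : seq (S * Act) :=
  map (fun j : 'I_n => (ss (inord j), acts j))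
      (filter (fun k : 'I_n => (k < i)%N) (enum 'I_n)).

Definition path_prob (sigma : scheduler R S Act) n (ss : {ffun 'I_n.+1 -> S})
    (acts : {ffun 'I_n -> Act}) : R :=
  Defs.iota M (ss ord0) *
  \prod_(i < n) (sigma (history ss acts i) (ss (inord i)) (acts i) *
                 Pt M (ss (inord i)) (acts i) (ss (inord i.+1))).

Definition obs_prob n (ss : {ffun 'I_n.+1 -> S}) : R :=
  \prod_(i < n.+1) obs M (ss i) (t i).

Definition forward (sigma : scheduler R S Act) n : {ffun S -> R} :=
  [ffun s => \sum_(ss : {ffun 'I_n.+1 -> S} | ss ord_max == s)
               \sum_(acts : {ffun 'I_n -> Act})
                 obs_prob ss * path_prob sigma ss acts].

Lemma size_history n (ss : {ffun 'I_n.+1 -> S}) acts i :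
  (i <= n)%N -> size (history ss acts i) = i.
Proof.
move=> le_in; rewrite size_map -(size_map (@nat_of_ord n)).
have -> : map (@nat_of_ord n) [seq k : 'I_n <- enum 'I_n | (k < i)%N] =
          [seq k <- iota 0 n | (k < i)%N].
  by rewrite -val_enum_ord filter_map.
by rewrite (filter_iota_ltn 0 (j := i)) // size_iota.
Qed.

Lemma history_rcons n (ss : {ffun 'I_n.+1 -> S}) acts x a i : (i <= n)%N ->
  history (ffun_rcons ss x) (ffun_rcons acts a) i = history ss acts i.
Proof.
move=> le_in; rewrite /history enum_ordSr filter_rcons ltnNge le_in.
rewrite filter_map -map_comp; apply: eq_map => k /=.
by rewrite ffun_rcons_inord ?ffun_rcons_widen // ltnW.
Qed.

Lemma path_prob_rcons sigma n (ss : {ffun 'I_n.+1 -> S}) acts x a :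
  path_prob sigma (ffun_rcons ss x) (ffun_rcons acts a) =
  path_prob sigma ss acts *
  (sigma (history ss acts n) (ss ord_max) a * Pt M (ss ord_max) a x).
Proof.
have inord_max : forall m, (inord m : 'I_m.+1) = ord_max.
  by move=> m; apply/val_inj; rewrite /= inordK.
rewrite /path_prob big_ord_recr /= ffun_rcons_ord0 -!mulrA; congr (_ * _).
congr (_ * _).
  apply: eq_bigr => i _; rewrite history_rcons 1?ltnW //.
  by rewrite ffun_rcons_widen !ffun_rcons_inord // ltnW.
by rewrite history_rcons // ffun_rcons_inord // !inord_max !ffun_rcons_max.
Qed.

Lemma obs_prob_rcons n (ss : {ffun 'I_n.+1 -> S}) x :
  obs_prob (ffun_rcons ss x) = obs_prob ss * obs M x (t n.+1).
Proof.
rewrite /obs_prob big_ord_recr ffun_rcons_max; congr (_ * _).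
by apply: eq_bigr => i _; rewrite ffun_rcons_widen.
Qed.

Lemma forward0 sigma :
  forward sigma 0 = [ffun s => Defs.iota M s * obs M s (t 0)].
Proof.
apply/ffunP => s; rewrite !ffunE (big_pred1 [ffun => s]); last first.
  move=> ss; apply/eqP/eqP => [<-|->]; last by rewrite ffunE.
  by apply/ffunP => i; rewrite ffunE (ord1 i) (ord1 ord_max).
under eq_bigr => acts _ do
  rewrite /obs_prob /path_prob big_ord1 big_ord0 !ffunE mulr1.
by rewrite sumr_const card_ffun card_ord expn0 mulr1n mulrC.
Qed.

Lemma forward_succE sigma n s' :
  forward sigma n.+1 s' =
  \sum_(ss : {ffun 'I_n.+1 -> S}) \sum_(acts : {ffun 'I_n -> Act})
    obs_prob ss * path_prob sigma ss acts *
    (\sum_a sigma (history ss acts n) (ss ord_max) a * Pt M (ss ord_max) a s') *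
    obs M s' (t n.+1).
Proof.
rewrite ffunE big_ffun_rcons; apply: eq_bigr => ss _.
under eq_bigl => x do rewrite ffun_rcons_max.
rewrite big_pred1_eq big_ffun_rcons; apply: eq_bigr => acts _.
rewrite mulr_sumr mulr_suml; apply: eq_bigr => a _.
rewrite obs_prob_rcons path_prob_rcons; ring.
Qed.

Lemma sum_forward sigma n :
  \sum_s forward sigma n s =
  \sum_(ss : {ffun 'I_n.+1 -> S}) \sum_(acts : {ffun 'I_n -> Act})
    obs_prob ss * path_prob sigma ss acts.
Proof.
rewrite (partition_big (fun ss : {ffun 'I_n.+1 -> S} => ss ord_max) predT) //=.
by apply: eq_bigr => s _; rewrite ffunE.
Qed.

Definition override (sigma : scheduler R S Act) n (vs : S -> {ffun Act -> R}) :
    scheduler R S Act :=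
  fun h s => if size h == n then vs s else sigma h s.

Lemma override_scheduler sigma n vs :
  is_scheduler M sigma -> decision_rule M vs ->
  is_scheduler M (override sigma n vs).
Proof. by move=> sched rule h s; rewrite /override; case: ifP. Qed.

Lemma path_prob_override sigma n vs (ss : {ffun 'I_n.+1 -> S}) acts :
  path_prob (override sigma n vs) ss acts = path_prob sigma ss acts.
Proof.
congr (_ * _); apply: eq_bigr => i _.
by rewrite /override size_history ?ltn_eqF // ltnW.
Qed.

Lemma forward_override_succ sigma n vs :
  forward (override sigma n vs) n.+1 = update M vs (forward sigma n) (t n.+1).
Proof.
apply/ffunP => s'; rewrite forward_succE ffunE.
under eq_bigr => ss _ do under eq_bigr => acts _ do
  rewrite path_prob_override {1}/override size_history // eqxx.
rewrite (partition_big_subst (fun ss : {ffun 'I_n.+1 -> S} => ss ord_max)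
  (fun ss s =>
  \sum_acts obs_prob ss * path_prob sigma ss acts *
    (\sum_a vs s a * Pt M s a s') * obs M s' (t n.+1))).
apply: eq_bigr => s _; rewrite ffunE !mulr_suml; apply: eq_bigr => ss _.
rewrite mulr_suml; apply: eq_bigr => acts _.
by rewrite !mulr_sumr mulr_suml; apply: eq_bigr => a _; ring.
Qed.

Definition joint (sigma : scheduler R S Act) n s a : R :=
  \sum_(ss : {ffun 'I_n.+1 -> S} | ss ord_max == s)
    \sum_(acts : {ffun 'I_n -> Act})
      obs_prob ss * path_prob sigma ss acts * sigma (history ss acts n) s a.

Lemma sum_joint_mul sigma n s (c : Act -> R) :
  \sum_a joint sigma n s a * c a =
  \sum_(ss : {ffun 'I_n.+1 -> S} | ss ord_max == s)
    \sum_(acts : {ffun 'I_n -> Act})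
      obs_prob ss * path_prob sigma ss acts *
      \sum_a sigma (history ss acts n) s a * c a.
Proof.
under eq_bigr => a _ do rewrite mulr_suml.
rewrite exchange_big; apply: eq_bigr => ss _.
under eq_bigr => a _ do rewrite mulr_suml.
rewrite exchange_big; apply: eq_bigr => acts _.
by rewrite mulr_sumr; apply: eq_bigr => a _; rewrite mulrA.
Qed.

Lemma sum_joint sigma n s :
  is_scheduler M sigma -> \sum_a joint sigma n s a = forward sigma n s.
Proof.
move=> sched; under eq_bigr => a _ do rewrite -[joint _ _ _ _]mulr1.
rewrite sum_joint_mul ffunE; apply: eq_bigr => ss _; apply: eq_bigr => acts _.
by under eq_bigr => a _ do rewrite mulr1; rewrite (sched _ _).1.2 mulr1.
Qed.

(* The distribution of sigma's action at step [n] conditioned on the current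
   state [s]; the fallback for states of probability 0 is arbitrary. *)
Definition avg_rule (sigma : scheduler R S Act) n s : {ffun Act -> R} :=
  if forward sigma n s == 0 then sigma [::] s
  else [ffun a => joint sigma n s a / forward sigma n s].

Hypothesis wf : wf_MDP M.

Lemma iota_ge0 s : 0 <= Defs.iota M s.
Proof. by case: wf => -[iota_ge0 _] _ _ _. Qed.

Lemma Pt_ge0 s a s' : 0 <= Pt M s a s'.
Proof.
case: wf => _ P_distr _ _; rewrite /Pt.
by case Psa: (P M s a) => [d|] //; exact: (P_distr _ _ _ Psa).1.
Qed.

Lemma obs_ge0 s z : 0 <= obs M s z.
Proof. by case: wf => _ _ obs_distr _; exact: (obs_distr s).1. Qed.

Lemma path_prob_ge0 sigma n (ss : {ffun 'I_n.+1 -> S}) acts :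
  is_scheduler M sigma -> 0 <= path_prob sigma ss acts.
Proof.
move=> sched; rewrite mulr_ge0 ?iota_ge0 // prodr_ge0 // => i _.
by rewrite mulr_ge0 ?Pt_ge0 // (sched _ _).1.1.
Qed.

Lemma obs_prob_ge0 n (ss : {ffun 'I_n.+1 -> S}) : 0 <= obs_prob ss.
Proof. by rewrite prodr_ge0 // => i _; exact: obs_ge0. Qed.

Lemma forward_ge0 sigma n s : is_scheduler M sigma -> 0 <= forward sigma n s.
Proof.
move=> sched; rewrite ffunE sumr_ge0 // => ss _; rewrite sumr_ge0 // => acts _.
by rewrite mulr_ge0 ?obs_prob_ge0 ?path_prob_ge0.
Qed.

Lemma joint_ge0 sigma n s a : is_scheduler M sigma -> 0 <= joint sigma n s a.
Proof.
move=> sched; rewrite sumr_ge0 // => ss _; rewrite sumr_ge0 // => acts _.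
apply: mulr_ge0; last exact: (sched _ _).1.1.
by rewrite mulr_ge0 ?obs_prob_ge0 ?path_prob_ge0.
Qed.

Lemma joint_avg_rule sigma n s a : is_scheduler M sigma ->
  joint sigma n s a = forward sigma n s * avg_rule sigma n s a.
Proof.
move=> sched; rewrite /avg_rule; have [f0|f0] := eqVneq (forward sigma n s) 0.
  rewrite f0 mul0r; apply: (psumr_eq0P (P := predT)) => // [a' _|].
    exact: joint_ge0.
  by rewrite sum_joint.
by rewrite [X in _ * X]ffunE mulrCA divff ?mulr1.
Qed.

Lemma avg_rule_decision sigma n :
  is_scheduler M sigma -> decision_rule M (avg_rule sigma n).
Proof.
move=> sched s; rewrite /avg_rule; case: eqP => [_|/eqP f0]; first exact: sched.
split; first split.
- by move=> a; rewrite ffunE divr_ge0 ?joint_ge0 ?forward_ge0.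
- by under eq_bigr do rewrite ffunE; rewrite -mulr_suml sum_joint // divff.
move=> a Psa; rewrite ffunE /joint big1 ?mul0r // => ss _.
by rewrite big1 // => acts _; rewrite (sched _ _).2 // mulr0.
Qed.

Lemma forward_succ sigma n : is_scheduler M sigma ->
  forward sigma n.+1 = update M (avg_rule sigma n) (forward sigma n) (t n.+1).
Proof.
move=> sched; apply/ffunP => s'; rewrite forward_succE ffunE.
rewrite (partition_big_subst (fun ss : {ffun 'I_n.+1 -> S} => ss ord_max)
  (fun ss s =>
  \sum_acts obs_prob ss * path_prob sigma ss acts *
    (\sum_a sigma (history ss acts n) s a * Pt M s a s') * obs M s' (t n.+1))).
apply: eq_bigr => s _; rewrite [RHS]mulr_sumr.
under [RHS]eq_bigr => a _ do rewrite !mulrA -joint_avg_rule // -mulrA.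
rewrite sum_joint_mul; apply: eq_bigr => ss _; apply: eq_bigr => acts _.
by rewrite -mulrA mulr_suml; under eq_bigr => a _ do rewrite -mulrA.
Qed.

Lemma exists_scheduler : exists sigma, is_scheduler M sigma.
Proof.
have [pick_act pick_actP] : {f : S -> Act & forall s, P M s (f s) <> None}.
  by apply: (@choice _ _ (fun s a => P M s a <> None)); case: wf.
exists (fun _ s => [ffun a => (a == pick_act s)%:R]) => _ s; split; first split.
- by move=> a; rewrite ffunE ler0n.
- rewrite (bigD1 (pick_act s)) //= ffunE eqxx big1 ?addr0 // => a.
  by rewrite ffunE => /negPf ->.
- by move=> a; rewrite ffunE; case: eqP => // ->; move/pick_actP.
Qed.

Lemma init_belief_normalize z :
  init_belief M z = normalize [ffun s => Defs.iota M s * obs M s z].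
Proof.
rewrite /init_belief; case: ifPn => [_|no_pos]; apply/ffunP => s; rewrite !ffunE.
  by congr (_ / _); apply: eq_bigr => s0 _; rewrite ffunE.
move: no_pos; rewrite negb_exists => /forallP /(_ s); rewrite -leNgt => le0.
have -> : Defs.iota M s * obs M s z = 0.
  by apply/eqP; rewrite eq_le le0 mulr_ge0 ?iota_ge0 ?obs_ge0.
by rewrite mul0r.
Qed.

Fixpoint est_upto n : set (belief R S) :=
  if n is k.+1 then \bigcup_(b in est_upto k) est_up M b (t k.+1)
  else [set init_belief M (t 0)].

Lemma est_upto_forward n bel :
  est_upto n bel <->
  exists2 sigma, is_scheduler M sigma & bel = normalize (forward sigma n).
Proof.
elim: n bel => [|n IHn] bel /=.
  have [sigma sched] := exists_scheduler.
  rewrite init_belief_normalize; split => [->|[sigma' _ ->]].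
    by exists sigma; rewrite ?forward0.
  by rewrite forward0.
split => [[_ /IHn[sigma sched ->]]|[sigma sched ->]].
  case/est_up_normalizeP => [s|vs rule ->]; first exact: forward_ge0.
  exists (override sigma n vs); first exact: override_scheduler.
  by rewrite forward_override_succ.
exists (normalize (forward sigma n)); first by apply/IHn; exists sigma.
apply/est_up_normalizeP => [s|]; first exact: forward_ge0.
by exists (avg_rule sigma n); [exact: avg_rule_decision | rewrite forward_succ].
Qed.

End ForwardVector.

Lemma foldl_est_up (R : realType) (S Act Z : finType) (M : MDP R S Act Z)
    (t : nat -> Z) z0 zs k :
  (forall i, (i < size zs)%N -> t (k + i).+1 = nth z0 zs i) ->
  foldl (fun B z => \bigcup_(b in B) est_up M b z) (est_upto M t k) zs =
  est_upto M t (k + size zs).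
Proof.
elim: zs k => [|z zs IHzs] k t_eq /=; first by rewrite addn0.
have -> : z = t k.+1 by rewrite -[k]addn0 t_eq.
by rewrite (IHzs k.+1) ?addSnnS // => i lt_i; rewrite addSnnS t_eq.
Qed.

Lemma est_MDP_upto (R : realType) (S Act Z : finType) (M : MDP R S Act Z) z0 zs :
  est_MDP M z0 zs = est_upto M (tr z0 zs) (size zs).
Proof. exact: (@foldl_est_up _ _ _ _ M (tr z0 zs) z0 zs 0). Qed.

Lemma risk_value_forward (R : realType) (S Act Z : finType) (M : MDP R S Act Z)
    z0 zs (r : S -> R) sigma :
  risk_value M z0 zs r sigma =
  \sum_s normalize (forward M (tr z0 zs) sigma (size zs)) s * r s.
Proof.
have trace_eq :
    Pr_trace M z0 zs sigma = \sum_s forward M (tr z0 zs) sigma (size zs) s.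
  rewrite sum_forward; apply: eq_bigr => ss _.
  by apply: eq_bigr => acts _; rewrite mulrC.
rewrite /risk_value (partition_big_subst
  (fun ss : {ffun 'I_(size zs).+1 -> S} => ss ord_max) (fun ss s =>
   \sum_acts Pr_obs M z0 ss * Pr_path M sigma ss acts /
     Pr_trace M z0 zs sigma * r s)).
apply: eq_bigr => s _; rewrite !ffunE -trace_eq !mulr_suml.
by apply: eq_bigr => ss _; rewrite !mulr_suml.
Qed.

Unset Implicit Arguments.

Theorem theorem1 (R : realType) (S Act Z : finType) (M : MDP R S Act Z)
  (z0 : Z) (zs : seq Z) (r : S -> R) :
  wf_MDP M -> (forall s, 0 <= r s) ->
  weighted_risk M z0 zs r =
  sup [set \sum_(s : S) bel s * r s | bel in est_MDP M z0 zs].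
Proof.
(* The two sets of values coincide. *)
move=> wf _; rewrite /weighted_risk est_MDP_upto; congr sup; apply/seteqP; split.
  move=> _ [sigma [sched ->]].
  exists (normalize (forward M (tr z0 zs) sigma (size zs))).
    by apply/(est_upto_forward _ wf); exists sigma.
  by rewrite risk_value_forward.
move=> _ [bel /(est_upto_forward _ wf)[sigma sched ->] <-].
by exists sigma; rewrite risk_value_forward.
Qed.
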